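(* Let $Z_1,\ldots,Z_{n+1}$ be i.i.d. from an arbitrary distribution $\mathcal P$, let $V$ be a fixed score function and $\alpha\in(0,1)$. Fix a grid $0\le a_1<\cdots<a_M\le 1$ and let $\tilde\alpha$ be the smallest grid value $a_m$ such that, with $\tilde\alpha=a_m$, either $\bar v^*:=Q(\tilde\alpha;\hat{\mathcal F})=\infty$ or condition (G2) holds (assume such a grid value always exists, e.g. $a_M=1$). Let $\widehat C(X_{n+1})=\{y\in\mathbb R: V(X_{n+1},y)\le Q(\tilde\alpha;\hat{\mathcal F})\}$. Then $\mathbb P\{Y_{n+1}\in\widehat C(X_{n+1})\}\ge\alpha$.
   Context: Data: $Z_i=(X_i,Y_i)\in\mathbb R^p\times\mathbb R$, $i=1,\ldots,n+1$; $X=\{X_1,\ldots,X_{n+1}\}$ (unordered). A localizer is a function $H(x_1,x_2,X)\in[0,1]$ of $x_1,x_2\in\mathbb R^p$ and of the unordered set $X$, satisfying $H(x,x,X)=1$ for all $x$. Write $H_{i,j}=H(X_i,X_j,X)$ and $p^H_{i,j}=H_{i,j}/\sum_{k=1}^{n+1}H_{i,k}$. For a probability distribution $\mathcal F$ on $\mathbb R\cup\{\infty\}$ and $a\in[0,1]$, $Q(a;\mathcal F)=\inf\{t:\mathbb P_{T\sim\mathcal F}(T\le t)\ge a\}$; $\delta_v$ denotes the point mass at $v$. A fixed score function is a deterministic measurable $V:\mathbb R^p\times\mathbb R\to[0,\infty)$ not depending on the data; $V_i=V(Z_i)$. Define $\hat{\mathcal F}=\sum_{j=1}^{n}p^H_{n+1,j}\delta_{V_j}+p^H_{n+1,n+1}\delta_{\infty}$.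 For a level $\tilde\alpha$, let $v^*_{i1}=Q(\tilde\alpha;\sum_{j=1}^n p^H_{i,j}\delta_{V_j}+p^H_{i,n+1}\delta_{\bar v^*})$ and $v^*_{i2}=Q(\tilde\alpha;\sum_{j=1}^n p^H_{i,j}\delta_{V_j}+p^H_{i,n+1}\delta_{0})$ for $i=1,\ldots,n$. Condition (G2): $\frac{1}{n+1}\sum_{i=1}^n\mathbb 1\{V_i\le v^*_{i1}\}\ge\alpha$ and $\frac{1}{n+1}\sum_{i=1}^n\mathbb 1\{V_i\le v^*_{i2}\}+\frac{1}{n+1}\ge\alpha$. *)

From HB Require Import structures.
From mathcomp Require Import all_boot all_order all_algebra all_fingroup.
From mathcomp Require Import all_classical all_reals all_analysis.
Set Implicit Arguments. Unset Strict Implicit. Unset Printing Implicit Defensive.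
Import Order.TTheory GRing.Theory Num.Theory.
Local Open Scope ring_scope.
Local Open Scope classical_set_scope.

(* Features live in R^p, represented as p.-tuple R (product sigma-algebra =
   Borel sigma-algebra of R^p).
   The n+1 data points are indexed by 'I_n.+1; the index ord_max (value n)
   is the test point Z_{n+1}, indices j with (j < n)%N are Z_1..Z_n. *)

Section Localized.
Variables (R : realType) (p n : nat).

Notation Rp := (p.-tuple R).

(* Q(a; F) for the discrete distribution F = sum_j w j * delta_(v j), values
   in the extended reals: inf { t | P_{T~F}(T <= t) >= a }. *)
Definition Qd (a : R) (w : 'I_n.+1 -> R) (v : 'I_n.+1 -> \bar R) : \bar R :=
  ereal_inf [set t : \bar R | a <= \sum_(j < n.+1 | (v j <= t)%E) w j].

(* H : localizer, H x1 x2 X with X the (multi)set of all n+1 features,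
   passed as a tuple (H is required to be permutation invariant in X). *)
Variable H : Rp -> Rp -> (n.+1).-tuple Rp -> R.

(* realized data: features xs and scores vs (vs i = V(Z_i)) *)
Variables (xs : 'I_n.+1 -> Rp) (vs : 'I_n.+1 -> R).

Definition Xset : (n.+1).-tuple Rp := [tuple xs i | i < n.+1].

Definition Hm (i j : 'I_n.+1) : R := H (xs i) (xs j) Xset.

Definition pH (i j : 'I_n.+1) : R := Hm i j / \sum_(k < n.+1) Hm i k.

Definition vbar (a : R) : \bar R :=
  Qd a (pH ord_max) (fun j => if (j < n)%N then (vs j)%:E else +oo%E).

Definition vstar1 (a : R) (i : 'I_n.+1) : \bar R :=
  Qd a (pH i) (fun j => if (j < n)%N then (vs j)%:E else vbar a).

Definition vstar2 (a : R) (i : 'I_n.+1) : \bar R :=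
  Qd a (pH i) (fun j => if (j < n)%N then (vs j)%:E else 0%E).

Definition G2 (alpha a : R) : bool :=
  (alpha <= (\sum_(i < n.+1 | (i < n)%N) ((vs i)%:E <= vstar1 a i)%E%:R)
             / n.+1%:R)
  && (alpha <= (\sum_(i < n.+1 | (i < n)%N) ((vs i)%:E <= vstar2 a i)%E%:R)
                / n.+1%:R + 1 / n.+1%:R).

Variables (M : nat) (grid : 'I_M -> R) (alpha : R).

Definition admissible (m : 'I_M) : bool :=
  (vbar (grid m) == +oo%E) || G2 alpha (grid m).

(* index of the smallest admissible grid value (grid is increasing) *)
Definition sel : option 'I_M :=
  [pick m | admissible m & [forall k, admissible k ==> (m <= k)%N]].

(* Q(\tilde alpha; \hat F); the None branch is never used under the
   standing assumption that an admissible grid value exists. *)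
Definition threshold : \bar R :=
  match sel with Some m => vbar (grid m) | None => +oo%E end.

Definition Chat (V : Rp * R -> R) : set R :=
  [set y | ((V (xs ord_max, y))%:E <= threshold)%E].

End Localized.

Definition mutually_independent d (T : measurableType d) (R : realType)
  (P : probability T R) d' (U : measurableType d') (k : nat)
  (Z : 'I_k -> T -> U) : Prop :=
  forall A : 'I_k -> set U, (forall i, measurable (A i)) ->
    P (\bigcap_(i in [set: 'I_k]) (Z i @^-1` A i)) =
    (\prod_(i < k) P (Z i @^-1` A i))%E.

From HB Require Import structures.
From mathcomp Require Import all_boot all_order all_algebra all_fingroup.
From mathcomp Require Import all_classical all_reals all_analysis.
From mathcomp Require Import measurable_realfun.
Import Order.TTheory GRing.Theory Num.Theory.
Local Open Scope ring_scope.
Local Open Scope classical_set_scope.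
Set Implicit Arguments. Unset Strict Implicit.

(* Compare the procedure with an oracle that also sees the test score
   V_(n+1): at level a it covers point i when V_i <= Q(a; sum_j p^H_(i,j)
   delta_(V_j)), and it runs at the smallest grid level where it covers at
   least alpha (n+1) of the n+1 points.  The oracle treats all points alike,
   so, the sample being exchangeable, the test point is missed with
   probability equal to the average miss rate, at most 1 - alpha.  If the
   actual interval misses the test point, the selected level a has
   vbar(a) < V_(n+1); then the first half of (G2) makes the oracle cover
   alpha (n+1) points at level a, so the oracle runs at a level <= a, where
   its quantile at the test point is at most vbar(a) < V_(n+1): the oracle
   misses too. *)

Section WeightedQuantile.
Context (R : realType) (n : nat).
Implicit Types (a : R) (w : 'I_n.+1 -> R) (u v : 'I_n.+1 -> \bar R).

Definition wcdf w v (t : \bar R) : R := \sum_(j < n.+1 | (v j <= t)%E) w j.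

Definition Qmin a w v : \bar R :=
  if a <= 0 then -oo%E else \big[mine/+oo%E]_(j | a <= wcdf w v (v j)) v j.

Lemma QdE a w v : (forall j, 0 <= w j) -> Qd a w v = Qmin a w v.
Proof.
move=> w0; rewrite /Qd /Qmin; case: ifP => a0.
  rewrite (_ : [set t | _] = setT) ?ereal_infT //; apply/seteqP; split => // t _.
  by apply: le_trans a0 _; rewrite sumr_ge0.
apply/le_anti/andP; split.
  have [[j Pj]|none] := pselect (exists j, a <= wcdf w v (v j)).
    have [i0 Pi0 ->] := @eq_bigmin _ _ _ +oo%E j
      (fun j => a <= wcdf w v (v j)) v Pj (fun i _ => leey (v i)).
    exact: ereal_inf_lbound.
  rewrite big_pred0 ?leey // => j; apply/negP => Pj; apply: none; by exists j.
apply/ereal_infP => t /= Ht.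
have [[k vkt]|none] := pselect (exists k, (v k <= t)%E); last first.
  move: Ht; rewrite big_pred0 ?ltNge ?a0 // => k.
  by apply/negP => vkt; apply: none; exists k.
have [j vjt jmax] := @eq_bigmax _ _ _ -oo%E k (fun k => (v k <= t)%E) v vkt
  (fun i _ => leNye (v i)).
apply: le_trans (@bigmin_le_cond _ _ _ +oo%E j _ v _) vjt.
apply: le_trans Ht _; rewrite /wcdf [leLHS]big_mkcond [leRHS]big_mkcond.
apply: ler_sum => i _; case: (boolP (v i <= t)%E) => vit; last by case: ifP.
by rewrite ifT // -jmax; apply: le_bigmax_cond.
Qed.

Lemma le_Qd_level a b w v : a <= b -> (Qd a w v <= Qd b w v)%E.
Proof. by move=> ab; apply: ereal_inf_le_tmp => t /=; apply: le_trans. Qed.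

Lemma le_Qd_values a w u v : (forall j, 0 <= w j) -> (forall j, u j <= v j)%E ->
  (Qd a w u <= Qd a w v)%E.
Proof.
move=> w0 uv; apply: ereal_inf_le_tmp => t /= Ht; apply: le_trans Ht _.
rewrite big_mkcond [leRHS]big_mkcond; apply: ler_sum => i _.
by case: ifP => vit; [rewrite ifT // (le_trans (uv i))|case: ifP].
Qed.

Lemma Qd_perm a w v (s : 'S_n.+1) : Qd a (w \o s) (v \o s) = Qd a w v.
Proof.
have sum_perm t : \sum_(j < n.+1 | ((v \o s) j <= t)%E) (w \o s) j = wcdf w v t.
  by rewrite /wcdf [RHS](reindex_inj (@perm_inj _ s)).
by rewrite /Qd; under eq_set => t do rewrite sum_perm.
Qed.

End WeightedQuantile.

Lemma ord_lt_max (n : nat) (j : 'I_n.+1) : (j < n)%N = (j != ord_max).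
Proof. by rewrite -(inj_eq val_inj) /= ltn_neqAle -ltnS ltn_ord andbT. Qed.

Lemma pick_minP (M : nat) (P : pred 'I_M) m0 : P m0 ->
  {m | [pick m | P m & [forall k, P k ==> (m <= k)%N]] = Some m &
       P m /\ forall k, P k -> (m <= k)%N}.
Proof.
move=> Pm0; case: pickP => [m /andP[Pm /forallP mk]|none].
  by exists m => //; split => // k Pk; exact: (implyP (mk k)).
exfalso; case: (arg_minnP val Pm0) => i Pi imin.
have := none i; rewrite Pi /= => /negbT/forallPn[k]; rewrite negb_imply.
by case/andP => Pk; rewrite imin.
Qed.
Arguments pick_minP {M P m0}.

Lemma natr_le_implyb (R : numDomainType) (b1 b2 : bool) :
  (b1 -> b2) -> (b1%:R : R) <= b2%:R.
Proof. by case: b1; case: b2 => // /(_ isT). Qed.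

Section Oracle.
Context (R : realType) (p n : nat)
  (H : p.-tuple R -> p.-tuple R -> (n.+1).-tuple (p.-tuple R) -> R)
  (M : nat) (grid : 'I_M -> R) (alpha : R).
Hypothesis H01 : forall x1 x2 X, 0 <= H x1 x2 X <= 1.
Hypothesis Hdiag : forall x X, H x x X = 1.
Implicit Types (xs : 'I_n.+1 -> p.-tuple R) (vs : 'I_n.+1 -> R).

Lemma Hm_ge0 xs i j : 0 <= Hm H xs i j.
Proof. by case/andP: (H01 (xs i) (xs j) (Xset xs)). Qed.

Lemma sum_Hm_gt0 xs i : 0 < \sum_(k < n.+1) Hm H xs i k.
Proof.
rewrite (bigD1 i) //= {1}/Hm Hdiag ltr_pwDl // sumr_ge0 // => k _.
exact: Hm_ge0.
Qed.

Lemma pH_ge0 xs i j : 0 <= pH H xs i j.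
Proof. by rewrite /pH divr_ge0 ?Hm_ge0 // ltW // sum_Hm_gt0. Qed.

Definition oracle_quantile xs vs a i : \bar R :=
  Qd a (pH H xs i) (fun j => (vs j)%:E).

Definition oracle_count xs vs a : R :=
  \sum_(i < n.+1) ((vs i)%:E <= oracle_quantile xs vs a i)%E%:R.

Definition oracle_ok xs vs m : bool :=
  alpha * n.+1%:R <= oracle_count xs vs (grid m).

Definition oracle_level xs vs : option 'I_M :=
  [pick m | oracle_ok xs vs m & [forall k, oracle_ok xs vs k ==> (m <= k)%N]].

Definition oracle_miss xs vs i : bool :=
  if oracle_level xs vs is Some m
  then ~~ ((vs i)%:E <= oracle_quantile xs vs (grid m) i)%E else false.

Lemma oracle_miss_sum xs vs : alpha < 1 ->
  \sum_(i < n.+1) (oracle_miss xs vs i)%:R <= (1 - alpha) * n.+1%:R.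
Proof.
move=> a1; rewrite /oracle_miss /oracle_level.
case: pickP => [m /andP[okm _]|_]; last first.
  by rewrite big1 // mulr_ge0 // subr_ge0 ltW.
rewrite (eq_bigr (fun i =>
    1 - ((vs i)%:E <= oracle_quantile xs vs (grid m) i)%E%:R)); last first.
  by move=> i _; case: (_ <= _)%E; rewrite ?subrr ?subr0.
rewrite sumrB sumr_const card_ord mulrBl mul1r lerB //.
Qed.

Lemma G2_oracle_ok xs vs m :
  (vbar H xs vs (grid m) < (vs ord_max)%:E)%E -> G2 H xs vs alpha (grid m) ->
  oracle_ok xs vs m.
Proof.
move=> vblt /andP[G1 _]; move: G1; rewrite ler_pdivlMr ?ltr0Sn // => G1.
apply: le_trans G1 _; rewrite /oracle_count.
rewrite [leRHS](bigID (fun i : 'I_n.+1 => (i < n)%N)) /= ler_wpDr ?sumr_ge0 //.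
apply: ler_sum => i _; apply: natr_le_implyb => /le_trans; apply.
apply: le_Qd_values => j; first exact: pH_ge0.
case: ifP => // /negbT; rewrite ord_lt_max negbK => /eqP ->; exact: ltW.
Qed.

(* [vbar] is the oracle's quantile at the test point with [V_(n+1)] raised to
   [+oo], hence an upper bound for it. *)
Lemma uncovered_oracle_miss xs vs :
  (forall i j : 'I_M, (i < j)%N -> grid i < grid j) ->
  (exists m, admissible H xs vs grid alpha m) ->
  ~~ ((vs ord_max)%:E <= threshold H xs vs grid alpha)%E ->
  oracle_miss xs vs ord_max.
Proof.
move=> grid_incr [m0 adm0]; have [m selm [admm _]] := pick_minP adm0.
rewrite /threshold /sel selm -ltNge => vblt.
have vb_fin : (vbar H xs vs (grid m) == +oo)%E = false.
  by apply/negbTE; rewrite lt_eqF // (lt_trans vblt) ?ltey.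
move: admm; rewrite /admissible vb_fin => /(G2_oracle_ok vblt) okm.
have [m' selm' [_ minm']] := pick_minP okm.
rewrite /oracle_miss /oracle_level selm' -ltNge; apply: le_lt_trans vblt.
apply: (@le_trans _ _ (oracle_quantile xs vs (grid m) ord_max)).
  apply: le_Qd_level; have := minm' m okm; rewrite leq_eqVlt => /orP[/eqP e|lt].
    by rewrite (_ : m' = m) //; exact: val_inj.
  exact/ltW/grid_incr.
apply: le_Qd_values => j; first exact: pH_ge0.
by case: ifP => _; rewrite ?leey.
Qed.

Section Permutation.
Hypothesis H_perm : forall (s : 'S_n.+1) x1 x2 X,
  H x1 x2 [tuple tnth X (s i) | i < n.+1] = H x1 x2 X.
Variable s : 'S_n.+1.

Lemma Hm_perm xs i k : Hm H (xs \o s) i k = Hm H xs (s i) (s k).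
Proof.
rewrite /Hm -[RHS](H_perm s); congr H.
by apply: eq_from_tnth => j; rewrite !tnth_mktuple.
Qed.

Lemma pH_perm xs i k : pH H (xs \o s) i k = pH H xs (s i) (s k).
Proof.
rewrite /pH Hm_perm; congr (_ / _); under eq_bigr do rewrite Hm_perm.
by rewrite [RHS](reindex_inj (@perm_inj _ s)).
Qed.

Lemma oracle_quantile_perm xs vs a i :
  oracle_quantile (xs \o s) (vs \o s) a i = oracle_quantile xs vs a (s i).
Proof.
rewrite /oracle_quantile -(Qd_perm _ _ (fun j => (vs j)%:E) s).
by congr Qd; apply/funext => k; rewrite /= pH_perm.
Qed.

Lemma oracle_count_perm xs vs : oracle_count (xs \o s) (vs \o s) = oracle_count xs vs.
Proof.
apply/funext => a; rewrite /oracle_count; under eq_bigr do rewrite oracle_quantile_perm.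
by rewrite [RHS](reindex_inj (@perm_inj _ s)).
Qed.

Lemma oracle_miss_perm xs vs i :
  oracle_miss (xs \o s) (vs \o s) i = oracle_miss xs vs (s i).
Proof.
rewrite /oracle_miss /oracle_level /oracle_ok oracle_count_perm.
by case: pickP => // m _; rewrite oracle_quantile_perm.
Qed.

End Permutation.
End Oracle.

Lemma minimal_ord_unique (M : nat) (P : pred 'I_M) m1 m2 :
  P m1 && [forall k, P k ==> (m1 <= k)%N] ->
  P m2 && [forall k, P k ==> (m2 <= k)%N] -> m1 = m2.
Proof.
move=> /andP[P1 /forallP min1] /andP[P2 /forallP min2]; apply/val_inj/eqP.
by rewrite eqn_leq (implyP (min1 m2) P2) (implyP (min2 m1) P1).
Qed.

Lemma pick_unique_bigmin (R : realType) (I : finType) (P : pred I) (f : I -> \bar R) :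
  (forall i j, P i -> P j -> i = j) ->
  (if [pick i | P i] is Some i then f i else +oo%E) =
  \big[mine/+oo%E]_i (if P i then f i else +oo%E).
Proof.
move=> Pu; case: pickP => [i Pi|none]; last by rewrite big1 // => j _; rewrite none.
rewrite (bigD1 i) //= Pi big1 ?minEle ?leey // => j ji.
by case: ifP => // Pj; move: ji; rewrite (Pu _ _ Pj Pi) ?eqxx.
Qed.

Lemma pick_unique_exists (I : finType) (P : pred I) (g : pred I) :
  (forall i j, P i -> P j -> i = j) ->
  (if [pick i | P i] is Some i then g i else false) = [exists i, P i && g i].
Proof.
move=> Pu; case: pickP => [i Pi|none]; last first.
  by apply/esym/negbTE/existsPn => j; rewrite none.
apply/idP/existsP => [gi|[j /andP[Pj gj]]]; first by exists i; rewrite Pi.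
by rewrite (Pu _ _ Pi Pj).
Qed.

Section MeasurableCombinators.
Context (dY : measure_display) (Y : measurableType dY) (R : realType).
Local Notation mfun f := (measurable_fun [set: Y] f).

Lemma measurable_natr (b : Y -> bool) : mfun b -> mfun (fun y => (b y)%:R : R).
Proof.
move=> mb; rewrite (_ : (fun y => _) = (fun y => if b y then 1 else 0)).
  exact: measurable_fun_ifT.
by apply/funext => y; case: (b y).
Qed.

Lemma measurable_set_bool (b : Y -> bool) : mfun b -> measurable [set y | b y].
Proof. by move=> mb; have := mb measurableT [set true] I; rewrite setTI. Qed.

Lemma measurable_implyb (b c : Y -> bool) :
  mfun b -> mfun c -> mfun (fun y => b y ==> c y).
Proof.
move=> mb mc; under eq_fun do rewrite implybE.
by apply: measurable_or => //; exact: measurable_neg.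
Qed.

Lemma measurable_forall (I : finType) (b : I -> Y -> bool) :
  (forall i, mfun (b i)) -> mfun (fun y => [forall i, b i y]).
Proof.
move=> mb; rewrite (_ : (fun y => _) =
    fun y => \big[andb/true]_(i <- index_enum I) b i y); last first.
  by apply/funext => y; rewrite big_andE.
elim: (index_enum I) => [|i r IH].
  by rewrite (_ : (fun y => _) = fun=> true) //; apply/funext => y; rewrite big_nil.
rewrite (_ : (fun y => _) = fun y => b i y && \big[andb/true]_(j <- r) b j y).
  exact: measurable_and.
by apply/funext => y; rewrite big_cons.
Qed.

Lemma measurable_exists (I : finType) (b : I -> Y -> bool) :
  (forall i, mfun (b i)) -> mfun (fun y => [exists i, b i y]).
Proof.
move=> mb; rewrite (_ : (fun y => _) = fun y => ~~ [forall i, ~~ b i y]).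
  by apply/measurable_neg/measurable_forall => i; exact/measurable_neg.
apply/funext => y; rewrite negb_forall; apply: eq_existsb => i.
by rewrite negbK.
Qed.

Lemma measurable_sum_cond (I : finType) (P : pred I) (f : I -> Y -> R) :
  (forall i, P i -> mfun (f i)) -> mfun (fun y => \sum_(i | P i) f i y).
Proof.
move=> mf; under eq_fun do rewrite big_mkcond.
by apply: measurable_sum => i; case: (boolP (P i)) => Pi; [exact: mf|].
Qed.

Lemma measurable_bigmine (I : Type) (r : seq I) (f : I -> Y -> \bar R) :
  (forall i, mfun (f i)) -> mfun (fun y => \big[mine/+oo%E]_(i <- r) f i y).
Proof.
move=> mf; elim: r => [|i r IH].
  by rewrite (_ : (fun y => _) = fun=> +oo%E) //; apply/funext => y; rewrite big_nil.
rewrite (_ : (fun y => _) = fun y => mine (f i y) (\big[mine/+oo%E]_(j <- r) f j y)).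
  exact: measurable_mine.
by apply/funext => y; rewrite big_cons.
Qed.

Lemma measurable_Qd_normalized (n : nat) a (h : 'I_n.+1 -> Y -> R)
    (v : 'I_n.+1 -> Y -> \bar R) :
  (forall k y, 0 <= h k y) -> (forall y, 0 < \sum_k h k y) ->
  (forall k, mfun (h k)) -> (forall j, mfun (v j)) ->
  mfun (fun y => Qd a (fun k => h k y / \sum_k' h k' y) (v^~ y)).
Proof.
move=> h0 hsum0 mh mv.
have w0 y k : 0 <= h k y / \sum_k' h k' y by rewrite divr_ge0 // ltW.
under eq_fun => y do rewrite (QdE _ _ (w0 y)) /Qmin.
apply: measurable_fun_ifT => //; under eq_fun do rewrite bigmin_mkcond.
apply: measurable_bigmine => j; apply: measurable_fun_ifT => //.
under eq_fun do rewrite /wcdf -mulr_suml ler_pdivlMr //.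
apply: measurable_fun_ler; first by apply: measurable_funM => //; exact: measurable_sum.
under eq_fun do rewrite big_mkcond.
by apply: measurable_sum => k; apply: measurable_fun_ifT => //; exact: measurable_fun_lee.
Qed.

End MeasurableCombinators.

Section MeasurableProcedure.
Context (dY : measure_display) (Y : measurableType dY) (R : realType) (p n : nat)
  (H : p.-tuple R -> p.-tuple R -> (n.+1).-tuple (p.-tuple R) -> R)
  (M : nat) (grid : 'I_M -> R) (alpha : R)
  (xs : 'I_n.+1 -> Y -> p.-tuple R) (vs : 'I_n.+1 -> Y -> R).
Local Notation mfun f := (measurable_fun [set: Y] f).
Hypothesis H01 : forall x1 x2 X, 0 <= H x1 x2 X <= 1.
Hypothesis Hdiag : forall x X, H x x X = 1.
Hypothesis mH : measurable_fun setT
  (fun t : (p.-tuple R * p.-tuple R * (n.+1).-tuple (p.-tuple R))%type =>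
     H t.1.1 t.1.2 t.2).
Hypothesis mxs : forall i, mfun (xs i).
Hypothesis mvs : forall i, mfun (vs i).

Local Notation xs_ y := (fun i => xs i y).
Local Notation vs_ y := (fun i => vs i y).

Lemma measurable_Hm i k : mfun (fun y => Hm H (xs_ y) i k).
Proof.
have mX : mfun (fun y => Xset (xs_ y)).
  apply/measurable_fun_tnthP => j.
  by rewrite (_ : _ \o _ = xs j) //; apply/funext => y /=; rewrite tnth_mktuple.
apply: (measurableT_comp mH (g := fun y => (xs i y, xs k y, Xset (xs_ y)))).
by apply: measurable_fun_pair => //; exact: measurable_fun_pair.
Qed.

Lemma measurable_localized_Qd a i (v : 'I_n.+1 -> Y -> \bar R) :
  (forall j, mfun (v j)) -> mfun (fun y => Qd a (pH H (xs_ y) i) (v^~ y)).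
Proof.
move=> mv; rewrite /pH.
apply: (measurable_Qd_normalized a (h := fun k y => Hm H (xs_ y) i k)) => //.
- by move=> k y; exact: Hm_ge0.
- by move=> y; exact: sum_Hm_gt0.
- by move=> k; exact: measurable_Hm.
Qed.

Let measurable_last_slot (c : Y -> \bar R) (j : 'I_n.+1) : mfun c ->
  mfun (fun y => if (j < n)%N then (vs j y)%:E else c y).
Proof. by case: (j < n)%N => // _; exact/measurable_EFinP. Qed.

Lemma measurable_vbar a : mfun (fun y => vbar H (xs_ y) (vs_ y) a).
Proof.
apply: (measurable_localized_Qd a ord_max
  (v := fun j y => if (j < n)%N then (vs j y)%:E else +oo%E)) => j.
exact: measurable_last_slot.
Qed.

Lemma measurable_G2 a : mfun (fun y => G2 H (xs_ y) (vs_ y) alpha a).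
Proof.
have mcount (c : Y -> \bar R) : mfun c -> mfun (fun y =>
    \sum_(i < n.+1 | (i < n)%N) ((vs i y)%:E <= Qd a (pH H (xs_ y) i)
      (fun j => if (j < n)%N then (vs j y)%:E else c y))%E%:R : R).
  move=> mc; apply: measurable_sum_cond => i _; apply/measurable_natr.
  apply: measurable_fun_lee; first exact/measurable_EFinP.
  apply: (measurable_localized_Qd a i
    (v := fun j y => if (j < n)%N then (vs j y)%:E else c y)) => j.
  exact: measurable_last_slot.
apply: measurable_and; apply: measurable_fun_ler => //.
  by apply: measurable_funM => //; apply: mcount; exact: measurable_vbar.
by apply: measurable_funD => //; apply: measurable_funM => //; exact: mcount.
Qed.

Lemma measurable_admissible m :
  mfun (fun y => admissible H (xs_ y) (vs_ y) grid alpha m).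
Proof.
apply: measurable_or; last exact: measurable_G2.
by apply: measurable_fun_eqe => //; exact: measurable_vbar.
Qed.

Lemma measurable_covered (g : Y -> \bar R) : mfun g ->
  mfun (fun y => g y <= threshold H (xs_ y) (vs_ y) grid alpha)%E.
Proof.
move=> mg; apply: measurable_fun_lee => //.
rewrite (_ : (fun y => _) = fun y => \big[mine/+oo%E]_m
   (if admissible H (xs_ y) (vs_ y) grid alpha m &&
      [forall k, admissible H (xs_ y) (vs_ y) grid alpha k ==> (m <= k)%N]
    then vbar H (xs_ y) (vs_ y) (grid m) else +oo%E)).
  apply: measurable_bigmine => m; apply: measurable_fun_ifT => //.
    apply: measurable_and; first exact: measurable_admissible.
    by apply: measurable_forall => k; apply: measurable_implyb => //;
      exact: measurable_admissible.
  exact: measurable_vbar.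
apply/funext => y; rewrite /threshold /sel pick_unique_bigmin //.
exact: minimal_ord_unique.
Qed.

Lemma measurable_oracle_count a :
  mfun (fun y => oracle_count H (xs_ y) (vs_ y) a).
Proof.
apply: measurable_sum_cond => i _; apply/measurable_natr.
apply: measurable_fun_lee; first exact/measurable_EFinP.
by apply: measurable_localized_Qd => j; exact/measurable_EFinP.
Qed.

Lemma measurable_oracle_miss i :
  mfun (fun y => oracle_miss H grid alpha (xs_ y) (vs_ y) i).
Proof.
have mok m : mfun (fun y => oracle_ok H grid alpha (xs_ y) (vs_ y) m).
  by apply: measurable_fun_ler => //; exact: measurable_oracle_count.
rewrite (_ : (fun y => _) = fun y => [exists m,
   (oracle_ok H grid alpha (xs_ y) (vs_ y) m &&
      [forall k, oracle_ok H grid alpha (xs_ y) (vs_ y) k ==> (m <= k)%N])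
    && ~~ ((vs i y)%:E <= oracle_quantile H (xs_ y) (vs_ y) (grid m) i)%E]).
  apply: measurable_exists => m; apply: measurable_and.
    apply: measurable_and => //.
    by apply: measurable_forall => k; exact: measurable_implyb.
  apply/measurable_neg/measurable_fun_lee; first exact/measurable_EFinP.
  by apply: measurable_localized_Qd => j; exact/measurable_EFinP.
apply/funext => y; rewrite /oracle_miss /oracle_level pick_unique_exists //.
exact: minimal_ord_unique.
Qed.

End MeasurableProcedure.

Section ProbabilityFacts.
Context (d : measure_display) (T : measurableType d) (R : realType)
  (P : probability T R).
Local Open Scope ereal_scope.

Lemma probability_preimage_eq (dU : measure_display) (U : measurableType dU)
    (G : set (set U)) (f g : T -> U) :
  @measurable _ U = <<s G >> -> setI_closed G ->
  measurable_fun setT f -> measurable_fun setT g ->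
  (forall B, G B -> P (f @^-1` B) = P (g @^-1` B)) ->
  forall B, measurable B -> P (f @^-1` B) = P (g @^-1` B).
Proof.
move=> mG GI mf mg fgG B mB.
have mpre (h : T -> U) C : measurable_fun setT h -> measurable C ->
    measurable (h @^-1` C).
  by move=> mh mC; rewrite -[X in measurable X]setTI; exact: mh.
move: B mB; rewrite mG.
apply: (dynkin_induction (P := [set B | P (f @^-1` B) = P (g @^-1` B)]) mG GI).
- by rewrite /= !preimage_setT.
- exact: fgG.
- move=> S mS fgS.
  change (P (f @^-1` ~` S) = P (g @^-1` ~` S)).
  change (P (f @^-1` S) = P (g @^-1` S)) in fgS.
  have preC (h : T -> U) : h @^-1` (~` S) = ~` (h @^-1` S) by [].
  rewrite !preC (probability_setC P (mpre _ _ mf mS)).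
  by rewrite (probability_setC P (mpre _ _ mg mS)) fgS.
- move=> F mF tF fgF.
  change (P (f @^-1` \bigcup_n F n) = P (g @^-1` \bigcup_n F n)).
  have tpre (h : T -> U) : trivIset setT (fun n => h @^-1` F n).
    apply/trivIsetP => i j _ _ ij; rewrite -preimage_setI.
    by move/trivIsetP : tF => /(_ i j I I ij) ->; rewrite preimage_set0.
  rewrite !preimage_bigcup !measure_bigcup //; last 2 first.
  + by move=> i _; exact: mpre mg (mF i).
  + by move=> i _; exact: mpre mf (mF i).
  by apply: eq_eseriesr => i _; exact: fgF.
Qed.

Lemma sum_probability_le (I : finType) (E : I -> set T) (c : R) :
  (forall i, measurable (E i)) ->
  (forall w, (\sum_i \1_(E i) w <= c)%R) ->
  \sum_i P (E i) <= c%:E.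
Proof.
move=> mE sumE.
have -> : \sum_i P (E i) = \int[P]_w (\sum_i (\1_(E i) w)%:E).
  rewrite ge0_integral_sum //; last by move=> i; exact/measurable_EFinP.
  by apply: eq_bigr => i _; rewrite integral_indic // setIT.
apply: le_trans (_ : \int[P]_w (cst c%:E w) <= _).
  apply: ge0_le_integral => //.
  - by move=> w _; rewrite sume_ge0 // => i _; rewrite lee_fin indicE.
  - by apply: emeasurable_sum => i; exact/measurable_EFinP.
  - by move=> w _; rewrite sumEFin lee_fin.
by rewrite integral_cst // [X in _ * X](probability_setT P) mule1.
Qed.

Lemma probability_fineK (A : set T) : measurable A -> (fine (P A))%:E = P A.
Proof.
move=> mA; rewrite fineK // ge0_fin_numE ?measure_ge0 //.
exact: le_lt_trans (probability_le1 P mA) (ltey _).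
Qed.

Lemma probability_ge_setC (C E : set T) (a : R) :
  measurable C -> measurable E -> ~` C `<=` E ->
  P E <= (1 - a)%R%:E -> a%:E <= P C.
Proof.
move=> mC mE CE PE.
have : P (~` C) <= (1 - a)%R%:E.
  by apply: le_trans PE; apply: le_measure; rewrite ?inE //; exact: measurableC.
rewrite (probability_setC P mC) -(probability_fineK mC).
by rewrite -EFinB !lee_fin lerD2l lerN2.
Qed.

End ProbabilityFacts.

Definition permute_tuple (U : Type) (k : nat) (s : 'S_k) (t : k.-tuple U) :
  k.-tuple U := [tuple tnth t (s i) | i < k].

Definition tuple_app (A B : Type) (k : nat) (f : A -> B) (t : k.-tuple A)
  (i : 'I_k) : B := f (tnth t i).
Arguments tuple_app {A B k} f t i.

Lemma tuple_app_permute (A B : Type) (k : nat) (f : A -> B) (s : 'S_k) (t : k.-tuple A) :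
  tuple_app f (permute_tuple s t) = tuple_app f t \o s.
Proof. by apply/funext => i; rewrite /tuple_app tnth_mktuple. Qed.

Lemma measurable_tuple_app (dA dB : measure_display) (A : measurableType dA)
    (B : measurableType dB) (k : nat) (f : A -> B) (i : 'I_k) :
  measurable_fun setT f -> measurable_fun setT ((tuple_app f)^~ i).
Proof. by move=> mf; apply: measurableT_comp mf _; exact: measurable_tnth. Qed.

Section Boxes.
Context (dU : measure_display) (U : measurableType dU) (k : nat).

Definition boxes : set (set ((k.+1).-tuple U)) :=
  [set B | exists2 A : 'I_k.+1 -> set U, (forall i, measurable (A i)) &
     B = \bigcap_(i in [set: 'I_k.+1]) ((fun t => tnth t i) @^-1` A i)].

Lemma boxes_generate : @measurable _ ((k.+1).-tuple U) = <<s boxes >>.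
Proof.
apply/seteqP; split.
  apply: smallest_sub; first exact: smallest_sigma_algebra.
  rewrite -bigcup_mkord_ord => B [i _ [A mA <-]]; apply: sub_sigma_algebra.
  exists (fun j => if j == inord i then A else setT) => [j|]; first by case: ifP.
  apply/seteqP; split => t /=; first by move=> [_ At] j _ /=; case: ifP => // /eqP ->.
  by move=> /(_ (inord i) I); rewrite eqxx.
apply: smallest_sub; first exact: sigma_algebra_measurable.
move=> _ [A mA ->]; apply: fin_bigcap_measurable => [|i _]; first exact: finite_finset.
by rewrite -[X in measurable X]setTI; exact: measurable_tnth.
Qed.

Lemma boxes_setI_closed : setI_closed boxes.
Proof.
move=> _ _ [A1 mA1 ->] [A2 mA2 ->].
exists (fun i => A1 i `&` A2 i) => [i|]; first exact: measurableI.
apply/seteqP; split => t /=; first by move=> [h1 h2] i _; split; [exact: h1|exact: h2].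
by move=> h; split => i _; have [] := h i I.
Qed.

End Boxes.

Section Exchangeability.
Context (d : measure_display) (T : measurableType d) (R : realType)
  (P : probability T R) (dU : measure_display) (U : measurableType dU)
  (Pz : probability U R) (k : nat) (Z : 'I_k.+1 -> T -> U).
Hypothesis mZ : forall i, measurable_fun setT (Z i).
Hypothesis indep : mutually_independent P Z.
Hypothesis idist : forall i (A : set U), measurable A -> P (Z i @^-1` A) = Pz A.

Definition sample (w : T) : (k.+1).-tuple U := [tuple Z i w | i < k.+1].

Lemma tuple_app_sample (C : Type) (f : U -> C) w :
  tuple_app f (sample w) = fun i => f (Z i w).
Proof. by apply/funext => i; rewrite /tuple_app tnth_mktuple. Qed.

Lemma measurable_sample_preimage B : measurable B -> measurable (sample @^-1` B).
Proof.
have msample : measurable_fun setT sample.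
  apply/measurable_fun_tnthP => j.
  by rewrite (_ : _ \o _ = Z j) //; apply/funext => w /=; rewrite tnth_mktuple.
by move=> mB; rewrite -[X in measurable X]setTI; exact: msample.
Qed.

Lemma measurable_permute_sample (s : 'S_k.+1) :
  measurable_fun setT (permute_tuple s \o sample).
Proof.
apply/measurable_fun_tnthP => j.
by rewrite (_ : _ \o _ = Z (s j)) //; apply/funext => w /=; rewrite !tnth_mktuple.
Qed.

Lemma probability_box (s : 'S_k.+1) (A : 'I_k.+1 -> set U) :
  (forall i, measurable (A i)) ->
  P ((permute_tuple s \o sample) @^-1`
       (\bigcap_(i in [set: 'I_k.+1]) ((fun t => tnth t i) @^-1` A i))) =
  (\prod_(i < k.+1) Pz (A i))%E.
Proof.
move=> mA.
have -> : (permute_tuple s \o sample) @^-1`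
    (\bigcap_(i in [set: 'I_k.+1]) ((fun t => tnth t i) @^-1` A i)) =
    \bigcap_(i in [set: 'I_k.+1]) (Z i @^-1` A (s^-1 i)%g).
  apply/seteqP; split => w /= h i _.
    by move: (h (s^-1 i)%g I); rewrite /= !tnth_mktuple permKV.
  by move: (h (s i) I); rewrite /= !tnth_mktuple permK.
rewrite indep => [|i]; last exact: mA.
under eq_bigr do rewrite idist ?mA //.
by rewrite [RHS](reindex_inj (@perm_inj _ (s^-1)%g)).
Qed.

Lemma probability_permute_sample (s s' : 'S_k.+1) B : measurable B ->
  P ((permute_tuple s \o sample) @^-1` B) = P ((permute_tuple s' \o sample) @^-1` B).
Proof.
apply: (probability_preimage_eq (P := P) (@boxes_generate _ U k)
  (@boxes_setI_closed _ U k) (measurable_permute_sample s)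
  (measurable_permute_sample s')).
by move=> _ [A mA ->]; rewrite !probability_box.
Qed.

Lemma exchangeable_event_bound (f : (k.+1).-tuple U -> 'I_k.+1 -> bool) (c : R) :
  measurable_fun setT (f^~ ord_max) ->
  (forall s t i, f (permute_tuple s t) i = f t (s i)) ->
  (forall t, \sum_(i < k.+1) (f t i)%:R <= c) ->
  (P [set w | f (sample w) ord_max] <= (c / k.+1%:R)%:E)%E.
Proof.
move=> mf f_perm f_sum.
pose E i := (permute_tuple (tperm i ord_max) \o sample) @^-1` [set t | f t ord_max].
have mB : measurable [set t | f t ord_max] by exact: measurable_set_bool.
have EE i : E i = [set w | f (sample w) i].
  by apply/seteqP; split => w; rewrite /E /= f_perm tpermR.
have mE i : measurable (E i).
  by rewrite -[X in measurable X]setTI; exact: measurable_permute_sample.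
have PE i : P (E i) = P (E ord_max) by exact: probability_permute_sample.
have memE w i : (w \in E i) = f (sample w) i.
  by rewrite EE; apply/idP/idP => [/set_mem|/mem_set].
have := sum_probability_le P mE (c := c).
under eq_bigr do rewrite PE.
rewrite -EE -(probability_fineK P (mE ord_max)) sumEFin sumr_const card_ord.
rewrite !lee_fin ler_pdivlMr // mulr_natr.
by apply; move=> w; under eq_bigr do rewrite indicE memE; exact: f_sum.
Qed.

End Exchangeability.

Theorem corollary2 (R : realType) (p n : nat)
  (d : measure_display) (T : measurableType d) (P : probability T R)
  (Pz : probability (p.-tuple R * R)%type R)
  (Z : 'I_n.+1 -> T -> (p.-tuple R * R)%type)
  (V : (p.-tuple R * R)%type -> R)
  (H : p.-tuple R -> p.-tuple R -> (n.+1).-tuple (p.-tuple R) -> R)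
  (alpha : R) (M : nat) (grid : 'I_M -> R) :
  (forall i, measurable_fun setT (Z i)) ->
  mutually_independent P Z ->
  (forall i (A : set (p.-tuple R * R)), measurable A ->
     P (Z i @^-1` A) = Pz A) ->
  measurable_fun setT V -> (forall z, 0 <= V z) ->
  (forall x1 x2 X, 0 <= H x1 x2 X <= 1) ->
  (forall x X, H x x X = 1) ->
  (forall (s : 'S_n.+1) x1 x2 X,
     H x1 x2 [tuple tnth X (s i) | i < n.+1] = H x1 x2 X) ->
  measurable_fun setT
    (fun t : (p.-tuple R * p.-tuple R * (n.+1).-tuple (p.-tuple R))%type =>
       H t.1.1 t.1.2 t.2) ->
  0 < alpha < 1 ->
  (forall i j : 'I_M, (i < j)%N -> grid i < grid j) ->
  (forall m, 0 <= grid m <= 1) ->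
  (forall w : T, exists m : 'I_M,
     admissible H (fun i => (Z i w).1) (fun i => V (Z i w)) grid alpha m) ->
  (alpha%:E <= P [set w | Chat H (fun i => (Z i w).1) (fun i => V (Z i w))
                              grid alpha V (Z ord_max w).2])%E.
Proof.
move=> mZ indep idist mV _ H01 Hdiag H_perm mH /andP[_ alpha_lt1] grid_incr _ ex_adm.
pose feats := @tuple_app _ _ n.+1 (@fst (p.-tuple R) R).
pose scores := @tuple_app _ _ n.+1 V.
pose miss t := oracle_miss H grid alpha (feats t) (scores t).
pose covered := [set t | (scores t ord_max)%:E <=
                         threshold H (feats t) (scores t) grid alpha]%E.
have mfeats i : measurable_fun setT (feats^~ i) by exact: measurable_tuple_app.
have mscores i : measurable_fun setT (scores^~ i) by exact: measurable_tuple_app.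
have mmiss := measurable_oracle_miss grid alpha H01 Hdiag mH mfeats mscores ord_max.
have miss_perm s t i : miss (permute_tuple s t) i = miss t (s i).
  by rewrite /miss /feats /scores !tuple_app_permute oracle_miss_perm.
have := exchangeable_event_bound mZ indep idist mmiss miss_perm
  (fun t => oracle_miss_sum H grid _ _ alpha_lt1).
rewrite mulfK // => miss_le.
have -> : [set w | Chat H (fun i => (Z i w).1) (fun i => V (Z i w)) grid alpha V
    (Z ord_max w).2] = sample Z @^-1` covered.
  apply/seteqP; split => w; rewrite /Chat /covered /feats /scores /= !tuple_app_sample;
    by case: (Z ord_max w).
apply: (probability_ge_setC _ _ _ miss_le).
- apply/measurable_sample_preimage/measurable_set_bool/measurable_covered => //.
  exact/measurable_EFinP.
- exact: (measurable_sample_preimage mZ (measurable_set_bool mmiss)).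
- move=> w /negP; rewrite /covered /miss /feats /scores /= !tuple_app_sample.
  exact: uncovered_oracle_miss grid_incr (ex_adm w).
Qed.
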